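(* Fix integers $0\le k\le n$ and on $\mathbb{C}^n=\mathbb{R}^{2n}$ with coordinates $(x,y)$ let $\alpha=\sum_{i=1}^n x_i^2$, $\beta=\sum_{i\le k}x_i^2+\sum_{i>k}y_i^2$, and $L_1=\{\alpha=0\}$, $L_2=\{\beta=0\}$. Set \[v_0=\sum_i\Big(\alpha y_i\delta_{i>k}\frac{\partial}{\partial x_i}+(\beta-\alpha\delta_{i\le k})x_i\frac{\partial}{\partial y_i}\Big),\qquad w_0=-J_{\mathbb{C}^n}v_0,\] where $J_{\mathbb{C}^n}$ is multiplication by $\sqrt{-1}$ (so $J_{\mathbb{C}^n}\partial_{x_i}=\partial_{y_i}$). Outside $L_1\cup L_2$, the matrix $M_0$ representing the form $dd^c\sqrt{\alpha\beta}(\cdot,\sqrt{-1}\cdot)$ in the standard basis $\{\partial_{x_1},\dots,\partial_{x_n},\partial_{y_1},\dots,\partial_{y_n}\}$ equals (a) $\dfrac{2\sum_{i\le k}x_i^2}{\sqrt{\alpha\beta}}\,\mathrm{Id}$ on $\mathrm{span}_{\mathbb{R}}\{v_0,w_0\}$, and (b) $\dfrac{\alpha+\beta}{\sqrt{\alpha\beta}}\,\mathrm{Id}$ on the orthogonal complement $\mathrm{span}_{\mathbb{R}}\{v_0,w_0\}^\perp$, with the convention $\sum_{i\le k}x_i^2=0$ if $k=0$. In particular, $\sqrt{\alpha\beta}M_0$ is a multiple of the identity precisely on $L_1\cup L_2\cup S_0$, where $S_0=\{x_i=y_i=0\ |\ i>k\}$.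
   Context: $\delta_{i\le k}$ equals $1$ if $i\le k$ and $0$ otherwise; $\delta_{i>k}=1-\delta_{i\le k}$. For a smooth function $f$, the symmetric form $dd^cf(\cdot,\sqrt{-1}\cdot)$ is normalized so that $dd^cf(u,\sqrt{-1}v)=D^2f(u,v)+D^2f(J_{\mathbb{C}^n}u,J_{\mathbb{C}^n}v)$ (e.g. it equals $2\,\mathrm{Id}$ for $f=\sum_i y_i^2$). *)

From HB Require Import structures.
From mathcomp Require Import all_boot all_order all_algebra.
From mathcomp Require Import all_classical all_reals all_analysis.
Set Implicit Arguments. Unset Strict Implicit. Unset Printing Implicit Defensive.
Import Order.TTheory GRing.Theory Num.Theory.
Import numFieldNormedType.Exports.
Local Open Scope ring_scope.

Section Defs.
Variables (R : realType) (n : nat).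

(* A point of C^n = R^(2n) is a row vector p = (x | y) : 'rV_(n+n),
   x_i = p 0 (lshift n i), y_i = p 0 (rshift n i); indices are 0-based,
   so the paper's "i <= k" (1-based) is "(i < k)%N" here. *)
Definition xc (p : 'rV[R]_(n + n)) (i : 'I_n) : R := lsubmx p 0 i.
Definition yc (p : 'rV[R]_(n + n)) (i : 'I_n) : R := rsubmx p 0 i.

Definition alpha (p : 'rV[R]_(n + n)) : R := \sum_(i < n) xc p i ^+ 2.
Definition sumxk (k : nat) (p : 'rV[R]_(n + n)) : R :=
  \sum_(i < n | (i < k)%N) xc p i ^+ 2.
Definition beta (k : nat) (p : 'rV[R]_(n + n)) : R :=
  sumxk k p + \sum_(i < n | (k <= i)%N) yc p i ^+ 2.

Definition Jc (u : 'rV[R]_(n + n)) : 'rV[R]_(n + n) :=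
  row_mx (- rsubmx u) (lsubmx u).

Definition v0 (k : nat) (p : 'rV[R]_(n + n)) : 'rV[R]_(n + n) :=
  row_mx (\row_i (if (k <= i)%N then alpha p * yc p i else 0))
         (\row_i ((beta k p - (if (i < k)%N then alpha p else 0)) * xc p i)).
Definition w0 (k : nat) (p : 'rV[R]_(n + n)) : 'rV[R]_(n + n) := - Jc (v0 k p).

Definition dot (u v : 'rV[R]_(n + n)) : R := \sum_i u 0 i * v 0 i.

Definition D2 (f : 'rV[R]_(n + n) -> R) (p u v : 'rV[R]_(n + n)) : R :=
  'D_u ('D_v f) p.

(* dd^c f(u, sqrt(-1) v) = D^2 f(u,v) + D^2 f(Ju, Jv) *)
Definition ddc (f : 'rV[R]_(n + n) -> R) (p u v : 'rV[R]_(n + n)) : R :=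
  D2 f p u v + D2 f p (Jc u) (Jc v).

Definition fab (k : nat) (p : 'rV[R]_(n + n)) : R := Num.sqrt (alpha p * beta k p).

Definition M0 (k : nat) (p : 'rV[R]_(n + n)) : 'M[R]_(n + n) :=
  \matrix_(i, j) ddc (fab k) p (delta_mx 0 i) (delta_mx 0 j).

Definition S0 (k : nat) (p : 'rV[R]_(n + n)) : Prop :=
  forall i : 'I_n, (k <= i)%N -> xc p i = 0 /\ yc p i = 0.

End Defs.

(* Let a = (x, 0) and let b be the vector whose only nonzero coordinates are
   x_i (i <= k) and y_i (i > k), so that alpha = |a|^2, beta = |b|^2 and
   sigma := sum_{i<=k} x_i^2 = <a, b>.  With s = sqrt (alpha beta), two
   differentiations show that s dd^c sqrt (alpha beta)(u, sqrt(-1) w) is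
   (alpha + beta) <u, w> plus products <f, u> <g, w> with f, g among
   a, b, J a, J b.  As w0 = beta a - alpha b and v0 = J w0, the Gram matrix of
   a, b, J a, J b gives the eigenvalue 2 sigma / s on w0, and J-invariance of
   dd^c carries it over to v0.  Orthogonality to v0 and w0 means
   <b, .> = (beta / alpha) <a, .> on w and J w, which cancels the extra
   products.  On S0 we have a = b.  Conversely, if s M0 = c Id and
   (x_i, y_i) <> 0 for some i > k, then w0 <> 0 forces c = 2 sigma, and the
   trace identity 2 n c = (2 n - 2)(alpha + beta) + 4 sigma gives
   (n - 1)(alpha + beta - 2 sigma) = 0 with alpha + beta - 2 sigma > 0,
   so n = 1 and k = 0. *)

From HB Require Import structures.
From mathcomp Require Import all_boot all_order all_algebra.
From mathcomp Require Import all_classical all_reals all_analysis.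
From mathcomp Require Import ring lra.
Set Implicit Arguments. Unset Strict Implicit. Unset Printing Implicit Defensive.
Import Order.TTheory GRing.Theory Num.Theory.
Import numFieldNormedType.Exports.
Local Open Scope ring_scope.

Section SqrtDerivative.
Variables (R : realType) (V : normedModType R).

Lemma derive_along_line (f : V -> R) a v :
  'D_v f a = 'D_1 (fun t : R => f (t *: v + a)) 0.
Proof.
rewrite /derive /= scale0r add0r; set g1 := fun t => _; set g2 := fun t => _.
by rewrite (_ : g1 = g2) //; apply/funext => t; rewrite /g1 /g2 addr0 [_%:A]mulr1.
Qed.

Lemma is_derive_sqrt (h : V -> R) a v dh : 0 < h a -> is_derive a v h dh ->
  is_derive a v (fun q => Num.sqrt (h q)) (dh / (2 * Num.sqrt (h a))).
Proof.
move=> ha [hav Dh].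
pose g t := h (t *: v + a).
have g0 : g 0 = h a by rewrite /g scale0r add0r.
have dg : derivable g 0 1 by exact: (derivable1P h a v).1.
have dsqrt : derivable (@Num.sqrt R) (g 0) 1 by rewrite g0; case: (is_derive1_sqrt ha).
have dsqrt_g : derivable (Num.sqrt \o g) 0 1.
  apply/(derivable1_diffP (Num.sqrt \o g) 0).
  by apply: (differentiable_comp (f := g) (g := @Num.sqrt R) (x := 0));
    [exact/(derivable1_diffP g 0) | exact/(derivable1_diffP (@Num.sqrt R) (g 0))].
apply: DeriveDef; first exact: (derivable1P (fun q => Num.sqrt (h q)) a v).2.
have Dg : 'D_1 g 0 = dh by rewrite -Dh derive_along_line.
rewrite derive_along_line -[LHS]derive1E (derive1_comp dg dsqrt).
by rewrite [X in X * _]derive1E [X in _ * X]derive1E Dg g0 derive_sqrt // mulrC.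
Qed.

Lemma is_derive_mul (f g : V -> R) a v df dg :
  is_derive a v f df -> is_derive a v g dg ->
  is_derive a v (fun q => f q * g q) (f a * dg + g a * df).
Proof. by move=> Df Dg; exact: is_deriveM. Qed.

Lemma is_derive_add (f g : V -> R) a v df dg :
  is_derive a v f df -> is_derive a v g dg ->
  is_derive a v (fun q => f q + g q) (df + dg).
Proof. by move=> Df Dg; exact: is_deriveD. Qed.

Lemma is_derive_sum_fun k (F : 'I_k -> V -> R) a v dF :
  (forall i, is_derive a v (F i) (dF i)) ->
  is_derive a v (fun q => \sum_i F i q) (\sum_i dF i).
Proof.
move=> DF; rewrite (_ : (fun q => _) = \sum_i F i); first exact: is_derive_sum.
by apply/funext => q; rewrite fct_sumE.
Qed.

Lemma is_derive_inv (f : V -> R) a v df : f a != 0 -> is_derive a v f df ->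
  is_derive a v (fun q => (f q)^-1) (- (f a) ^- 2 * df).
Proof.
by move=> fa [dfa <-]; apply: DeriveDef; [exact: derivableV | rewrite deriveV].
Qed.

Lemma derive2_sqrt (h : V -> R) (dh : V -> V -> R) p u v d2h :
  {for p, continuous h} -> 0 < h p ->
  (forall q w, is_derive q w h (dh q w)) -> is_derive p u (dh ^~ v) d2h ->
  'D_u ('D_v (fun q => Num.sqrt (h q))) p =
    d2h / (2 * Num.sqrt (h p)) - dh p u * dh p v / (4 * Num.sqrt (h p) ^+ 3).
Proof.
move=> hc hp Dh D2h.
have sp : Num.sqrt (h p) != 0 by rewrite gt_eqF ?sqrtr_gt0.
have Dv_near : \forall q \near p,
    'D_v (fun q => Num.sqrt (h q)) q = dh q v * (2 * Num.sqrt (h q))^-1.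
  near=> q; apply: derive_val; apply: (is_derive_sqrt _ (Dh q v)).
  by near: q; exact: (cvgr_gt _ hc 0 hp).
have D2sqrt : is_derive p u (fun q => 2 * Num.sqrt (h q))
    (2 * (dh p u / (2 * Num.sqrt (h p)))).
  have := is_derive_mul (f := fun=> 2) (is_derive_cst (2 : R) p u) (is_derive_sqrt hp (Dh p u)).
  by rewrite mulr0 addr0.
rewrite (near_eq_derive _ Dv_near); apply: derive_val; apply: is_derive_eq.
  by apply: (is_derive_mul D2h (is_derive_inv _ D2sqrt)); rewrite mulf_neq0.
by rewrite /=; field.
Unshelve. all: by end_near.
Qed.

End SqrtDerivative.

Section DiagonalForms.
Variables (R : realType) (m : nat).
Local Notation V := 'rV[R]_m.
Implicit Types c u v w : V.

Definition wdot c u w : R := \sum_j c 0 j * u 0 j * w 0 j.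

Lemma is_derive_coord (a v : V) j : is_derive a v (fun q : V => q 0 j) (v 0 j).
Proof.
apply: DeriveDef; first exact/diff_derivable/differentiable_coord.
rewrite derive_along_line (_ : (fun t : R => _) = fun t => t * v 0 j + a 0 j).
  have Dline := is_derive_add (f := fun t : R => t * v 0 j) (g := fun=> a 0 j)
    (is_derive_mul (f := id) (g := fun=> v 0 j)
       (is_derive_id (0 : R) 1) (is_derive_cst (v 0 j) (0 : R) 1))
    (is_derive_cst (a 0 j) (0 : R) 1).
  by rewrite derive_val; ring.
by apply/funext => t; rewrite !mxE.
Qed.

Lemma is_derive_wdotl c a v w : is_derive a v (fun q => wdot c q w) (wdot c v w).
Proof.
apply: is_derive_eq; first apply: is_derive_sum_fun => j.
  exact: is_derive_mul (is_derive_mul (is_derive_cst (c 0 j) a v) (is_derive_coord a v j))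
                       (is_derive_cst (w 0 j) a v).
by apply: eq_bigr => j _; rewrite /cst; ring.
Qed.

Lemma is_derive_wdot_diag c a v : is_derive a v (fun q => wdot c q q) (2 * wdot c a v).
Proof.
apply: is_derive_eq; first apply: is_derive_sum_fun => j.
  exact: is_derive_mul (is_derive_mul (is_derive_cst (c 0 j) a v) (is_derive_coord a v j))
                       (is_derive_coord a v j).
by rewrite mulr_sumr; apply: eq_bigr => j _; rewrite /cst; ring.
Qed.

Lemma continuous_wdot_diag c : continuous (fun q => wdot c q q).
Proof.
move=> a; rewrite (_ : (fun q => _) = \sum_j (fun q : V => c 0 j * q 0 j * q 0 j)); last first.
  by apply/funext => q; rewrite fct_sumE.
apply: (big_ind (fun f : V -> R => {for a, continuous f})) => [|f g|j _].
- exact: cst_continuous.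
- exact: continuousD.
- by apply: continuousM; [apply: continuousM; [exact: cst_continuous|] | ];
    exact: coord_continuous.
Qed.

Lemma derive2_sqrt_wdot_mul c1 c2 p u v : 0 < wdot c1 p p * wdot c2 p p ->
  'D_u ('D_v (fun q => Num.sqrt (wdot c1 q q * wdot c2 q q))) p =
  (wdot c2 p p * wdot c1 u v + wdot c1 p p * wdot c2 u v
   + 2 * (wdot c1 p u * wdot c2 p v + wdot c1 p v * wdot c2 p u)
   - (wdot c2 p p * wdot c1 p u + wdot c1 p p * wdot c2 p u)
     * (wdot c2 p p * wdot c1 p v + wdot c1 p p * wdot c2 p v)
     / (wdot c1 p p * wdot c2 p p)) / Num.sqrt (wdot c1 p p * wdot c2 p p).
Proof.
move=> hp; set Q1 := wdot c1 p p; set Q2 := wdot c2 p p.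
pose dh q w := wdot c1 q q * (2 * wdot c2 q w) + wdot c2 q q * (2 * wdot c1 q w).
have Dh q w : is_derive q w (fun q => wdot c1 q q * wdot c2 q q) (dh q w).
  exact: is_derive_mul (is_derive_wdot_diag c1 q w) (is_derive_wdot_diag c2 q w).
have D2h : is_derive p u (dh ^~ v)
    (Q1 * (2 * wdot c2 u v) + 2 * wdot c2 p v * (2 * wdot c1 p u)
     + (Q2 * (2 * wdot c1 u v) + 2 * wdot c1 p v * (2 * wdot c2 p u))).
  apply: is_derive_add; apply: is_derive_mul (is_derive_wdot_diag _ p u) _;
  by apply: is_derive_eq;
    [exact: is_derive_mul (is_derive_cst (2 : R) p u) (is_derive_wdotl _ _ _ _)
    | rewrite mulr0 addr0].
have hc : {for p, continuous (fun q => wdot c1 q q * wdot c2 q q)}.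
  by apply: continuousM; exact: continuous_wdot_diag.
rewrite (derive2_sqrt hc hp Dh D2h) /dh -/Q1 -/Q2.
have s0 : Num.sqrt (Q1 * Q2) != 0 by rewrite gt_eqF ?sqrtr_gt0.
have /andP[Q1_0 Q2_0] : (Q1 != 0) && (Q2 != 0) by rewrite -negb_or -mulf_eq0 gt_eqF.
rewrite exprS sqr_sqrtr ?ltW //.
by field; rewrite s0 Q1_0 Q2_0.
Qed.

End DiagonalForms.

Section ComplexCoordinates.
Variables (R : realType) (n : nat).
Local Notation V := 'rV[R]_(n + n).
Implicit Types c u v w x y : V.

Lemma xcE u i : xc u i = u 0 (lshift n i). Proof. by rewrite /xc mxE. Qed.
Lemma ycE u i : yc u i = u 0 (rshift n i). Proof. by rewrite /yc mxE. Qed.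

Lemma xc_row (X Y : 'rV[R]_n) i : xc (row_mx X Y) i = X 0 i.
Proof. by rewrite /xc row_mxKl. Qed.
Lemma yc_row (X Y : 'rV[R]_n) i : yc (row_mx X Y) i = Y 0 i.
Proof. by rewrite /yc row_mxKr. Qed.

Lemma xc0 i : xc (0 : V) i = 0. Proof. by rewrite xcE mxE. Qed.
Lemma yc0 i : yc (0 : V) i = 0. Proof. by rewrite ycE mxE. Qed.
Lemma xcD u w i : xc (u + w) i = xc u i + xc w i. Proof. by rewrite !xcE !mxE. Qed.
Lemma ycD u w i : yc (u + w) i = yc u i + yc w i. Proof. by rewrite !ycE !mxE. Qed.
Lemma xcZ a u i : xc (a *: u) i = a * xc u i. Proof. by rewrite !xcE !mxE. Qed.
Lemma ycZ a u i : yc (a *: u) i = a * yc u i. Proof. by rewrite !ycE !mxE. Qed.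
Lemma xcN u i : xc (- u) i = - xc u i. Proof. by rewrite !xcE !mxE. Qed.
Lemma ycN u i : yc (- u) i = - yc u i. Proof. by rewrite !ycE !mxE. Qed.
Lemma xc_map2 (f : R -> R -> R) c u i : xc (map2_mx f c u) i = f (xc c i) (xc u i).
Proof. by rewrite !xcE !mxE. Qed.
Lemma yc_map2 (f : R -> R -> R) c u i : yc (map2_mx f c u) i = f (yc c i) (yc u i).
Proof. by rewrite !ycE !mxE. Qed.
Lemma xc_Jc u i : xc (Jc u) i = - yc u i. Proof. by rewrite /Jc xc_row mxE. Qed.
Lemma yc_Jc u i : yc (Jc u) i = xc u i. Proof. by rewrite /Jc yc_row. Qed.

Lemma rV_xyP u w : (forall i, xc u i = xc w i) -> (forall i, yc u i = yc w i) -> u = w.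
Proof.
move=> hx hy; apply/rowP => j; rewrite -(fintype.splitK j).
by case: (fintype.split j) => i /=; [move: (hx i); rewrite !xcE | move: (hy i); rewrite !ycE].
Qed.

Lemma JcK u : Jc (Jc u) = - u.
Proof. by apply: rV_xyP => i; rewrite ?(xc_Jc, yc_Jc, xcN, ycN). Qed.
Lemma JcD u w : Jc (u + w) = Jc u + Jc w.
Proof. by apply: rV_xyP => i; rewrite ?(xc_Jc, yc_Jc, xcD, ycD) // opprD. Qed.
Lemma JcZ a u : Jc (a *: u) = a *: Jc u.
Proof. by apply: rV_xyP => i; rewrite ?(xc_Jc, yc_Jc, xcZ, ycZ) // mulrN. Qed.
Lemma JcN u : Jc (- u) = - Jc u.
Proof. by apply: rV_xyP => i; rewrite ?(xc_Jc, yc_Jc, xcN, ycN). Qed.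

Lemma dot_split u w :
  dot u w = \sum_i xc u i * xc w i + \sum_i yc u i * yc w i.
Proof. by rewrite /dot big_split_ord; congr (_ + _); apply: eq_bigr => i _; rewrite ?xcE ?ycE. Qed.

Lemma wdot_split c u w : wdot c u w =
  \sum_i xc c i * xc u i * xc w i + \sum_i yc c i * yc u i * yc w i.
Proof. by rewrite /wdot big_split_ord; congr (_ + _); apply: eq_bigr => i _; rewrite ?xcE ?ycE. Qed.

Lemma wdot_dot c u w : wdot c u w = dot (map2_mx *%R c u) w.
Proof. by apply: eq_bigr => j _; rewrite mxE. Qed.

Lemma wdot_Jc c u w : (forall i, xc c i + yc c i = 1) ->
  wdot c u w + wdot c (Jc u) (Jc w) = dot u w.
Proof.
move=> c1; rewrite !wdot_split dot_split -!big_split /=.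
by apply: eq_bigr => i _; rewrite !xc_Jc !yc_Jc -[RHS]mul1r -(c1 i); ring.
Qed.

Lemma dotC u w : dot u w = dot w u.
Proof. by apply: eq_bigr => j _; rewrite mulrC. Qed.
Lemma dotDr u v w : dot u (v + w) = dot u v + dot u w.
Proof. by rewrite /dot -big_split; apply: eq_bigr => j _; rewrite mxE mulrDr. Qed.
Lemma dotZr u a w : dot u (a *: w) = a * dot u w.
Proof. by rewrite /dot mulr_sumr; apply: eq_bigr => j _; rewrite mxE mulrCA. Qed.
Lemma dotNr u w : dot u (- w) = - dot u w.
Proof. by rewrite /dot -sumrN; apply: eq_bigr => j _; rewrite mxE mulrN. Qed.
Lemma dotDl u v w : dot (u + v) w = dot u w + dot v w.
Proof. by rewrite dotC dotDr !(dotC w). Qed.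
Lemma dotZl a u w : dot (a *: u) w = a * dot u w.
Proof. by rewrite dotC dotZr dotC. Qed.

Lemma dot_Jc u w : dot u (Jc w) = - dot (Jc u) w.
Proof.
rewrite !dot_split opprD -!sumrN addrC.
by congr (_ + _); apply: eq_bigr => i _; rewrite ?xc_Jc ?yc_Jc; ring.
Qed.

Lemma dot_JcJc u w : dot (Jc u) (Jc w) = dot u w.
Proof. by rewrite dot_Jc JcK dotC dotNr dotC opprK. Qed.

Lemma dot_Jc_self u : dot u (Jc u) = 0.
Proof. by have := dot_Jc u u; rewrite [dot (Jc u) u]dotC; lra. Qed.

Lemma dot_delta j u : dot (delta_mx 0 j) u = u 0 j.
Proof.
rewrite /dot (bigD1 j) //= big1 ?addr0 => [|i /negPf ij]; first by rewrite mxE !eqxx mul1r.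
by rewrite mxE eqxx ij mul0r.
Qed.

Lemma sum_dot_delta x y :
  \sum_j dot x (delta_mx 0 j) * dot y (delta_mx 0 j) = dot x y.
Proof. by apply: eq_bigr => j _; rewrite !(dotC _ (delta_mx 0 j)) !dot_delta. Qed.

Lemma sum_dot_Jc_delta x y :
  \sum_j dot x (Jc (delta_mx 0 j)) * dot y (Jc (delta_mx 0 j)) = dot x y.
Proof.
rewrite -dot_JcJc -sum_dot_delta; apply: eq_bigr => j _.
by rewrite !dot_Jc mulrNN !(dotC (Jc _)).
Qed.

End ComplexCoordinates.

Section PotentialForms.
Variables (R : realType) (n k : nat).
Local Notation V := 'rV[R]_(n + n).
Implicit Types q : V.

Definition xmask : V := row_mx (const_mx 1) 0.
Definition bmask : V := row_mx (\row_i (i < k)%:R) (\row_i (k <= i)%:R).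

Lemma xc_xmask i : xc xmask i = 1. Proof. by rewrite xc_row mxE. Qed.
Lemma yc_xmask i : yc xmask i = 0. Proof. by rewrite yc_row mxE. Qed.
Lemma xc_bmask i : xc bmask i = (i < k)%:R. Proof. by rewrite xc_row mxE. Qed.
Lemma yc_bmask i : yc bmask i = (k <= i)%:R. Proof. by rewrite yc_row mxE. Qed.

Lemma xmask_compl i : xc xmask i + yc xmask i = 1.
Proof. by rewrite xc_xmask yc_xmask addr0. Qed.
Lemma bmask_compl i : xc bmask i + yc bmask i = 1.
Proof. by rewrite xc_bmask yc_bmask; case: ltnP; rewrite ?addr0 ?add0r. Qed.

Lemma alpha_wdot q : alpha q = wdot xmask q q.
Proof.
rewrite /alpha wdot_split [X in _ = _ + X]big1 ?addr0 => [|i _]; last by rewrite yc_xmask !mul0r.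
by apply: eq_bigr => i _; rewrite xc_xmask mul1r expr2.
Qed.

Lemma beta_wdot q : beta k q = wdot bmask q q.
Proof.
rewrite wdot_split /beta /sumxk; congr (_ + _); rewrite big_mkcond /=;
  apply: eq_bigr => i _; rewrite ?xc_bmask ?yc_bmask;
  by case: ifP; rewrite ?mul1r ?mul0r ?expr2.
Qed.

Lemma alpha_ge0 q : 0 <= alpha q.
Proof. by apply: sumr_ge0 => i _; exact: sqr_ge0. Qed.

Lemma beta_ge0 q : 0 <= beta k q.
Proof. by apply: addr_ge0; apply: sumr_ge0 => i _; exact: sqr_ge0. Qed.

Lemma fab_wdot : fab k = fun q => Num.sqrt (wdot xmask q q * wdot bmask q q).
Proof. by apply/funext => q; rewrite /fab alpha_wdot beta_wdot. Qed.

Lemma alpha_beta_sumxk q : alpha q + beta k q - 2 * sumxk k q =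
  \sum_(i < n | (k <= i)%N) (xc q i ^+ 2 + yc q i ^+ 2).
Proof.
have -> : alpha q = sumxk k q + \sum_(i < n | (k <= i)%N) xc q i ^+ 2.
  rewrite /alpha /sumxk (bigID (fun i : 'I_n => (i < k)%N)) /=.
  by congr (_ + _); apply: eq_bigl => i; rewrite ltnNge negbK.
by rewrite /beta big_split /=; ring.
Qed.

Lemma alpha_beta_sumxk_gt0 q (i : 'I_n) : (k <= i)%N ->
  (xc q i != 0) || (yc q i != 0) -> 0 < alpha q + beta k q - 2 * sumxk k q.
Proof.
move=> ki nz; rewrite alpha_beta_sumxk (bigD1 i) //=.
have sq_gt0 (r : R) : r != 0 -> 0 < r ^+ 2 by move=> r0; rewrite lt0r sqr_ge0 sqrf_eq0 r0.
have := sqr_ge0 (xc q i); have := sqr_ge0 (yc q i).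
have : 0 <= \sum_(j < n | (k <= j)%N && (j != i)) (xc q j ^+ 2 + yc q j ^+ 2).
  by apply: sumr_ge0 => j _; rewrite addr_ge0 ?sqr_ge0.
by case/orP: nz => /sq_gt0; lra.
Qed.

Lemma w0E q : w0 k q = beta k q *: map2_mx *%R xmask q - alpha q *: map2_mx *%R bmask q.
Proof.
apply: rV_xyP => i; rewrite ?(xcN, ycN, xc_Jc, yc_Jc, xcD, ycD, xcZ, ycZ, xc_map2, yc_map2).
  by rewrite /v0 yc_row mxE xc_xmask xc_bmask; case: (_ < _)%N; rewrite /= ?mulr1n ?mulr0n; ring.
by rewrite /v0 xc_row mxE yc_xmask yc_bmask; case: (_ <= _)%N; rewrite /= ?mulr1n ?mulr0n; ring.
Qed.

Lemma v0E q : v0 k q = Jc (w0 k q).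
Proof. by rewrite /w0 JcN JcK opprK. Qed.

Lemma xc_w0 q (i : 'I_n) : (k <= i)%N -> xc (w0 k q) i = beta k q * xc q i.
Proof.
move=> ki; rewrite w0E xcD xcN !xcZ !xc_map2 xc_xmask xc_bmask ltnNge ki.
by rewrite !mul0r mulr0 subr0 mul1r.
Qed.

Lemma yc_w0 q (i : 'I_n) : (k <= i)%N -> yc (w0 k q) i = - (alpha q * yc q i).
Proof.
move=> ki; rewrite w0E ycD ycN !ycZ !yc_map2 yc_xmask yc_bmask ki.
by rewrite !mul0r mulr0 add0r mul1r.
Qed.

End PotentialForms.
Arguments xmask {R n}.
Arguments bmask {R n}.
Arguments xmask_compl {R n}.
Arguments bmask_compl {R n}.

Section HessianAtPoint.
Variables (R : realType) (n k : nat) (p : 'rV[R]_(n + n)).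
Hypotheses (a0 : alpha p != 0) (b0 : beta k p != 0).
Local Notation V := 'rV[R]_(n + n).
Local Notation s := (Num.sqrt (alpha p * beta k p)).
Local Notation xp := (map2_mx *%R xmask p).
Local Notation bp := (map2_mx *%R (bmask k) p).
Local Notation zp := (beta k p *: xp + alpha p *: bp).
Local Notation T := (ddc (fab k) p).
Implicit Types u v w : V.

Lemma alpha_beta_gt0 : 0 < alpha p * beta k p.
Proof. by rewrite mulr_gt0 // lt_def ?a0 ?b0 ?alpha_ge0 ?beta_ge0. Qed.

Lemma sqrt_alpha_beta_neq0 : s != 0.
Proof. by rewrite gt_eqF // sqrtr_gt0 alpha_beta_gt0. Qed.

Lemma dot_xp_xp : dot xp xp = alpha p.
Proof.
rewrite alpha_wdot dot_split wdot_split.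
by congr (_ + _); apply: eq_bigr => i _; rewrite !(xc_map2, yc_map2, xc_xmask, yc_xmask); ring.
Qed.

Lemma dot_bp_bp : dot bp bp = beta k p.
Proof.
rewrite beta_wdot dot_split wdot_split.
by congr (_ + _); apply: eq_bigr => i _; rewrite !(xc_map2, yc_map2, xc_bmask, yc_bmask);
  rewrite mulrACA -natrM mulnb andbb mulrA.
Qed.

Lemma dot_xp_bp : dot xp bp = sumxk k p.
Proof.
rewrite dot_split [X in _ + X]big1 ?addr0 => [|i _]; last first.
  by rewrite !yc_map2 yc_xmask !mul0r.
rewrite /sumxk [RHS]big_mkcond /=; apply: eq_bigr => i _.
rewrite !xc_map2 xc_xmask xc_bmask.
by case: (_ < _)%N; rewrite ?mulr1n ?mulr0n ?mul1r ?mul0r ?mulr0 ?expr2.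
Qed.

Lemma ddc_fabE u w : T u w =
  ((alpha p + beta k p) * dot u w
   + 2 * (dot xp u * dot bp w + dot xp w * dot bp u
          + dot xp (Jc u) * dot bp (Jc w) + dot xp (Jc w) * dot bp (Jc u))
   - (dot zp u * dot zp w + dot zp (Jc u) * dot zp (Jc w)) / (alpha p * beta k p)) / s.
Proof.
have hp := alpha_beta_gt0; rewrite alpha_wdot beta_wdot in hp.
(* Each mask is complementary to its J-image, so the Hessians of alpha and
   beta, summed over (u, w) and (J u, J w), become Euclidean products. *)
have wdotJ c : (forall i, xc c i + yc c i = 1) ->
    wdot c (Jc u) (Jc w) = dot u w - wdot c u w.
  by move=> c1; rewrite -(wdot_Jc u w c1); ring.
rewrite /ddc /D2 fab_wdot !(derive2_sqrt_wdot_mul _ _ hp).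
rewrite (wdotJ _ xmask_compl) (wdotJ _ (bmask_compl k)) -(alpha_wdot p) -(beta_wdot k p).
rewrite !wdot_dot !dotDl !dotZl.
by field; rewrite sqrt_alpha_beta_neq0 a0 b0.
Qed.

Lemma ddc_fabDr u w1 w2 : T u (w1 + w2) = T u w1 + T u w2.
Proof.
rewrite !ddc_fabE !(JcD, dotDr).
by field; rewrite sqrt_alpha_beta_neq0 a0 b0.
Qed.

Lemma ddc_fabZr u x w : T u (x *: w) = x * T u w.
Proof.
rewrite !ddc_fabE !(JcZ, dotZr).
by field; rewrite sqrt_alpha_beta_neq0 a0 b0.
Qed.

Lemma ddc_fabNr u w : T u (- w) = - T u w.
Proof. by rewrite -scaleN1r ddc_fabZr mulN1r. Qed.

Lemma ddc_fab_sum u w : T u w = \sum_j w 0 j * T u (delta_mx 0 j).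
Proof.
rewrite {1}(row_sum_delta w); elim/big_rec2: _ => [|j y1 y2 _ <-].
  by rewrite -(scale0r 0) ddc_fabZr mul0r.
by rewrite ddc_fabDr ddc_fabZr.
Qed.

Lemma ddc_fab_Jc u w : T (Jc u) (Jc w) = T u w.
Proof.
rewrite !ddc_fabE !JcK !dotNr dot_JcJc.
by field; rewrite sqrt_alpha_beta_neq0 a0 b0.
Qed.

Lemma ddc_fab_w0 u : T u (w0 k p) = 2 * sumxk k p / s * dot u (w0 k p).
Proof.
rewrite ddc_fabE w0E !(JcD, JcZ, JcN, dotDr, dotZr, dotNr, dotDl, dotZl) !(dotC u).
rewrite !dot_Jc_self (dot_Jc bp xp) (dotC (Jc bp)) (dotC bp xp) dot_xp_xp dot_bp_bp dot_xp_bp.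
by field; rewrite sqrt_alpha_beta_neq0 a0 b0.
Qed.

Lemma ddc_fab_v0 u : T u (v0 k p) = 2 * sumxk k p / s * dot u (v0 k p).
Proof.
by rewrite v0E -ddc_fab_Jc JcK ddc_fabNr ddc_fab_w0 (dot_Jc u) mulrN.
Qed.

Lemma ddc_fab_perp u w : dot w (v0 k p) = 0 -> dot w (w0 k p) = 0 ->
  T u w = (alpha p + beta k p) / s * dot u w.
Proof.
rewrite v0E dot_Jc w0E.
rewrite !(JcD, JcZ, JcN, dotDr, dotZr, dotNr) !(dotC w) !(dotC (Jc w)).
move=> /eqP; rewrite oppr_eq0 => /eqP hJ h.
have proportional x : beta k p * dot xp x - alpha p * dot bp x = 0 ->
    dot bp x = beta k p / alpha p * dot xp x.
  move=> hx; rewrite -[dot bp x](mulKf a0) (_ : _ * dot bp x = beta k p * dot xp x).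
    by rewrite mulrCA mulrA.
  by lra.
rewrite ddc_fabE !(dotDl, dotZl) (proportional w h) (proportional (Jc w) hJ).
by field; rewrite sqrt_alpha_beta_neq0 a0 b0.
Qed.
Lemma ddc_fab_S0 : S0 k p -> forall u w, T u w = (alpha p + beta k p) / s * dot u w.
Proof.
move=> hS u w.
have bp_xp : bp = xp.
  apply: rV_xyP => i; rewrite !(xc_map2, yc_map2, xc_xmask, yc_xmask, xc_bmask, yc_bmask).
    by case: ltnP => hi /=; rewrite ?mulr1n // (hS i hi).1 !mulr0.
  by case: leqP => hi /=; rewrite ?mulr0n // (hS i hi).2 !mulr0.
have ab : beta k p = alpha p by rewrite -dot_bp_bp bp_xp dot_xp_xp.
rewrite ddc_fabE bp_xp ab !(dotDl, dotZl).
have s0 := sqrt_alpha_beta_neq0; rewrite ab in s0.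
by field; rewrite s0 a0.
Qed.

Lemma trace_M0 :
  s * \tr (M0 k p) = 2 * ((n%:R - 1) * (alpha p + beta k p) + 2 * sumxk k p).
Proof.
pose e j : V := delta_mx 0 j.
have Tjj j : s * T (e j) (e j) = alpha p + beta k p
    + 4 * (dot xp (e j) * dot bp (e j) + dot xp (Jc (e j)) * dot bp (Jc (e j)))
    - (dot zp (e j) * dot zp (e j) + dot zp (Jc (e j)) * dot zp (Jc (e j)))
      / (alpha p * beta k p).
  rewrite ddc_fabE dot_delta mxE !eqxx mulr1n.
  by field; rewrite sqrt_alpha_beta_neq0 a0 b0.
rewrite /mxtrace mulr_sumr; under eq_bigr do rewrite mxE Tjj.
rewrite sumrB big_split sumr_const card_ord -mulr_sumr -mulr_suml !big_split /=.
rewrite !sum_dot_delta !sum_dot_Jc_delta !(dotDl, dotDr, dotZl, dotZr) (dotC bp xp).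
rewrite dot_xp_xp dot_bp_bp dot_xp_bp.
by field; rewrite a0 b0.
Qed.

Lemma M0_mul_tr l w : (forall u, T u w = l * dot u w) -> M0 k p *m w^T = l *: w^T.
Proof.
move=> Tw; apply/matrixP => i i0; rewrite !mxE (ord1 i0).
under eq_bigr do rewrite !mxE mulrC.
by rewrite -ddc_fab_sum Tw dot_delta.
Qed.

Lemma M0_span x y : M0 k p *m (x *: v0 k p + y *: w0 k p)^T =
  (2 * sumxk k p / s) *: (x *: v0 k p + y *: w0 k p)^T.
Proof.
apply: M0_mul_tr => u.
by rewrite ddc_fabDr !ddc_fabZr ddc_fab_v0 ddc_fab_w0 dotDr !dotZr; ring.
Qed.

Lemma M0_perp w : dot w (v0 k p) = 0 -> dot w (w0 k p) = 0 ->
  M0 k p *m w^T = ((alpha p + beta k p) / s) *: w^T.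
Proof. by move=> hv hw; apply: M0_mul_tr => u; exact: ddc_fab_perp. Qed.

Lemma scaled_M0_S0 : S0 k p -> s *: M0 k p = (alpha p + beta k p)%:M.
Proof.
move=> hS; apply/matrixP => i j; rewrite !mxE ddc_fab_S0 // dot_delta mxE eqxx /=.
by rewrite mulrA (mulrC s) divfK ?sqrt_alpha_beta_neq0 // mulr_natr.
Qed.

Lemma w0_neq0 (i : 'I_n) : (k <= i)%N -> (xc p i != 0) || (yc p i != 0) -> w0 k p != 0.
Proof.
move=> ki nz; apply/eqP => w0_0.
case/orP: nz => nz; [move: (xc_w0 p ki) | move: (yc_w0 p ki)];
  rewrite w0_0 ?xc0 ?yc0 => /esym/eqP;
  by rewrite ?oppr_eq0 mulf_eq0 (negPf nz) orbF ?(negPf a0) ?(negPf b0).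
Qed.

Lemma scalar_M0_w0 c : s *: M0 k p = c%:M -> w0 k p != 0 -> c = 2 * sumxk k p.
Proof.
move=> sM0 w0_neq0.
have : c *: w0 k p = (2 * sumxk k p) *: w0 k p.
  apply: trmx_inj; rewrite !linearZ /= -mul_scalar_mx -sM0 -scalemxAl.
  by rewrite (M0_mul_tr ddc_fab_w0) scalerA mulrCA mulfV ?sqrt_alpha_beta_neq0 ?mulr1.
by move/eqP; rewrite -subr_eq0 -scalerBl scaler_eq0 subr_eq0 (negPf w0_neq0) orbF => /eqP.
Qed.

Lemma scalar_M0_trace c : s *: M0 k p = c%:M ->
  c *+ (n + n) = 2 * ((n%:R - 1) * (alpha p + beta k p) + 2 * sumxk k p).
Proof. by move=> sM0; rewrite -mxtrace_scalar -sM0 mxtraceZ trace_M0. Qed.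

Lemma scalar_M0_S0 : ~ (n = 1 /\ k = 0) -> (exists c, s *: M0 k p = c%:M) -> S0 k p.
Proof.
move=> hn [c sM0] i ki.
have n1 : n <> 1%N.
  move=> n1; apply: hn; split => //.
  by have := leq_ltn_trans ki (ltn_ord i); rewrite n1 ltnS leqn0 => /eqP.
suff nz_n1 : (xc p i != 0) || (yc p i != 0) -> n = 1%N.
  by split; apply/eqP; apply: contraT => nz; case: n1; apply: nz_n1; rewrite nz ?orbT.
move=> nz; have gap := alpha_beta_sumxk_gt0 ki nz.
have tr := scalar_M0_trace sM0.
rewrite (scalar_M0_w0 sM0 (w0_neq0 ki nz)) -[_ *+ _]mulr_natr natrD in tr.
have : 2 * ((n%:R - 1) * (alpha p + beta k p - 2 * sumxk k p)) = 0.
  by rewrite -[RHS](subrr (2 * sumxk k p * (n%:R + n%:R))) {1}tr; ring.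
move/eqP; rewrite !mulf_eq0 pnatr_eq0 (gt_eqF gap) orbF /= subr_eq0 pnatr_eq1.
by move/eqP.
Qed.

End HessianAtPoint.

Theorem lemma3p1 (R : realType) (n k : nat) (hk : (k <= n)%N) :
  (forall p : 'rV[R]_(n + n), alpha p != 0 -> beta k p != 0 ->
     (forall w : 'rV[R]_(n + n),
        (exists a b : R, w = a *: v0 k p + b *: w0 k p) ->
        M0 k p *m w^T = (2 * sumxk k p / Num.sqrt (alpha p * beta k p)) *: w^T) /\
     (forall w : 'rV[R]_(n + n),
        dot w (v0 k p) = 0 -> dot w (w0 k p) = 0 ->
        M0 k p *m w^T = ((alpha p + beta k p) / Num.sqrt (alpha p * beta k p)) *: w^T))
  /\
  (~ (n = 1%N /\ k = 0%N) ->
   forall p : 'rV[R]_(n + n), alpha p != 0 -> beta k p != 0 ->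
     ((exists c : R, Num.sqrt (alpha p * beta k p) *: M0 k p = c%:M) <-> S0 k p)).
Proof.
split=> [p a0 b0 | hn p a0 b0]; split.
- by move=> w [x [y ->]]; exact: M0_span.
- exact: M0_perp.
- exact: scalar_M0_S0.
- by move=> /(scaled_M0_S0 a0 b0) sM0; exists (alpha p + beta k p).
Qed.
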